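(* Let $G=(V,E)$ be a graph on $V=\{1,\dots,n\}$ and $(\tilde g,\theta)$ any nominal configuration. Then $\Pi(\tilde g,\theta)\subseteq\mathrm{null}(M(G,\tilde g,\theta))$.
   Context: $E\subseteq\{(i,k):i\ne k\}$, where $(i,k)\in E$ means agent $k$ measures agent $i$. $R(\theta)$ is the $2\times2$ rotation by $\theta$, $\Theta=\mathrm{diag}(R(\theta),1)\in\mathbb R^{3\times3}$. $\tilde g=[\tilde g_1^\top,\dots,\tilde g_n^\top]^\top$, $\tilde g_i=[\tilde p_i^\top,\tilde\phi_i]^\top\in\mathbb R^3$, $\Theta^\top\tilde g_i=[\tilde p^x_{i,\theta},\tilde p^y_{i,\theta},\tilde\phi_i]^\top$; $\tilde p^x_{uv,\theta}=\tilde p^x_{u,\theta}-\tilde p^x_{v,\theta}$, similarly $y$, $\tilde\phi_{uv}=\tilde\phi_u-\tilde\phi_v$; $w_{uv}=\mathrm{diag}(\tilde p^x_{uv,\theta},\tilde p^y_{uv,\theta},\tilde\phi_{uv})$, $W_{uv}=w_{uv}\Theta^\top$. $C=\{(i,j,k)\in V^3:(i,k),(j,k)\in E,\ i<j\}$. The matrix-valued Laplacian $M(G,\tilde g,\theta)\in\mathbb R^{3n\times3n}$ is defined by: for $g=[g_1^\top,\dots,g_n^\top]^\top$, the $k$-th $3$-block of $Mg$ is $\sum_{(i,j,k)\in C}\big(W_{jk}(g_i-g_k)+W_{ki}(g_j-g_k)\big)$ (zero if empty). $\Pi(\tilde g,\theta)=\{g\in\mathbb R^{3n}:g_i=\tau+\Theta\,\mathrm{diag}(s)\Theta^\top\tilde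 g_i\ \forall i,\ s,\tau\in\mathbb R^3\}$. *)

From HB Require Import structures.
From mathcomp Require Import all_boot all_order all_algebra.
From mathcomp Require Import reals trigo.
Set Implicit Arguments. Unset Strict Implicit. Unset Printing Implicit Defensive.
Import Order.TTheory GRing.Theory Num.Theory.
Local Open Scope ring_scope.

(* A configuration g in R^{3n} is represented by its n blocks g_i in R^3. *)
Definition config (R : realType) (n : nat) := 'I_n -> 'cV[R]_3.

(* 2x2 rotation R(theta) = [[cos, -sin], [sin, cos]] *)
Definition rot2 (R : realType) (th : R) : 'M[R]_2 :=
  \matrix_(i < 2, j < 2)
    (if i == j then cos th
     else if (i : nat) == 0%N then - sin th else sin th).

Definition Theta (R : realType) (th : R) : 'M[R]_3 :=
  block_mx (rot2 th) 0 0 (1%:M : 'M[R]_1).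

Definition wmat (R : realType) (n : nat) (gt : config R n) (th : R)
  (u v : 'I_n) : 'M[R]_3 :=
  diag_mx ((Theta th)^T *m gt u - (Theta th)^T *m gt v)^T.

Definition Wmat (R : realType) (n : nat) (gt : config R n) (th : R)
  (u v : 'I_n) : 'M[R]_3 := wmat gt th u v *m (Theta th)^T.

(* The k-th 3-block of M(G,gt,th) g, where
   C = {(i,j,k) : (i,k) in E, (j,k) in E, i < j}. *)
Definition Mapply (R : realType) (n : nat) (E : {set 'I_n * 'I_n})
  (gt : config R n) (th : R) (g : config R n) : config R n :=
  fun k => \sum_(i < n) \sum_(j < n | [&& (i, k) \in E, (j, k) \in E & (i < j)%N])
      (Wmat gt th j k *m (g i - g k) + Wmat gt th k i *m (g j - g k)).

Definition in_null (R : realType) (n : nat) (E : {set 'I_n * 'I_n})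
  (gt : config R n) (th : R) (g : config R n) : Prop :=
  forall k, Mapply E gt th g k = 0.

Definition in_Pi (R : realType) (n : nat) (gt : config R n) (th : R)
  (g : config R n) : Prop :=
  exists (s : 'rV[R]_3) (tau : 'cV[R]_3),
    forall i, g i = tau + Theta th *m diag_mx s *m (Theta th)^T *m gt i.

From HB Require Import structures.
From mathcomp Require Import all_boot all_order all_algebra.
From mathcomp Require Import reals trigo.
From mathcomp Require Import ring.
Import Order.TTheory GRing.Theory Num.Theory.
Set Implicit Arguments. Unset Strict Implicit.
Local Open Scope ring_scope.

(* Write c_i = Theta^T gt_i.  For g in Pi, Theta being orthogonal gives
   W_uv (g_x - g_y) = diag(s) ((c_u - c_v) .* (c_x - c_y)), with .* the
   entrywise product.  The two terms of each summand of M g are therefore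
   diag(s) ((c_j - c_k) .* (c_i - c_k)) and diag(s) ((c_k - c_i) .* (c_j - c_k)),
   which cancel because .* is commutative. *)

Lemma diag_mx_trC (R : comPzRingType) (m : nat) (u v : 'cV[R]_m) :
  diag_mx u^T *m v = diag_mx v^T *m u.
Proof. by apply/matrixP => i j; rewrite !mul_diag_mx !mxE mulrC (ord1 j). Qed.

Lemma rot2_orthogonal (R : realType) (th : R) : (rot2 th)^T *m rot2 th = 1%:M.
Proof.
apply/matrixP => i j; rewrite !mxE !big_ord_recl big_ord0 !mxE.
have cos2Dsin2_th := cos2Dsin2 th.
case: i => [[|[|i]] Hi] //; case: j => [[|[|j]] Hj] //=;
  by [ring | rewrite -cos2Dsin2_th; ring].
Qed.

Lemma block_diag_orthogonal (R : comPzRingType) (m p : nat)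
    (A : 'M[R]_m) (B : 'M[R]_p) :
  A^T *m A = 1%:M -> B^T *m B = 1%:M ->
  (block_mx A 0 0 B)^T *m block_mx A 0 0 B = 1%:M.
Proof.
move=> orthA orthB; rewrite tr_block_mx mulmx_block orthA orthB !trmx0.
by rewrite !mul0mx !mulmx0 !addr0 !add0r -scalar_mx_block.
Qed.

Lemma Theta_orthogonal (R : realType) (th : R) : (Theta th)^T *m Theta th = 1%:M.
Proof.
have orth1 : (1%:M : 'M[R]_1)^T *m 1%:M = 1%:M by rewrite trmx1 mulmx1.
exact: block_diag_orthogonal (rot2_orthogonal th) orth1.
Qed.

Section PiConfiguration.

Variables (R : realType) (n : nat) (gt g : config R n) (th : R).
Variables (s : 'rV[R]_3) (tau : 'cV[R]_3).
Hypothesis g_Pi :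
  forall i, g i = tau + Theta th *m diag_mx s *m (Theta th)^T *m gt i.

Let c (i : 'I_n) := (Theta th)^T *m gt i.

Lemma Pi_diff (x y : 'I_n) :
  g x - g y = Theta th *m (diag_mx s *m (c x - c y)).
Proof. by rewrite !g_Pi opprD addrACA subrr add0r /c -!mulmxBr !mulmxA. Qed.

Lemma Wmat_mul_Pi_diff (u v x y : 'I_n) :
  Wmat gt th u v *m (g x - g y) =
  diag_mx s *m (diag_mx (c u - c v)^T *m (c x - c y)).
Proof.
rewrite Pi_diff /Wmat /wmat mulmxA -(mulmxA _ _ (Theta th)) Theta_orthogonal.
by rewrite mulmx1 !mulmxA diag_mx_comm.
Qed.

Lemma Mapply_Pi_summand (i j k : 'I_n) :
  Wmat gt th j k *m (g i - g k) + Wmat gt th k i *m (g j - g k) = 0.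
Proof.
rewrite !Wmat_mul_Pi_diff -mulmxDr (diag_mx_trC (c k - c i)).
by rewrite -[c k - c i]opprB mulmxN addrN mulmx0.
Qed.

End PiConfiguration.

Theorem lemma6 (R : realType) (n : nat) (E : {set 'I_n * 'I_n})
  (HE : forall i k, (i, k) \in E -> i != k)
  (gt : config R n) (th : R) :
  forall g : config R n, in_Pi gt th g -> in_null E gt th g.
Proof.
move=> g [s [tau g_Pi]] k.
rewrite /Mapply big1 // => i _; rewrite big1 // => j _.
exact: Mapply_Pi_summand g_Pi i j k.
Qed.
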